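(* Let $X$ be a finite group with $|X|=n$ and let $S\subseteq X$ be a generating set with $|S|=d$ and $S^{-1}=S$. Let $G$ be the Cayley graph $(X,S)$, and suppose $G$ is not bipartite. Then $$h_{out}(G)\leq 200\,\beta_{out}(G).$$
   Context: The Cayley graph $(X,S)$ has vertex set $X$ and edges $g\sim gs$ for all $g\in X$, $s\in S$. For a vertex set $A$, $\partial_{out}(A)$ is the set of vertices not in $A$ having a neighbor in $A$, and $I(A)$ is the number of vertices of $A$ having a neighbor in $A$. The vertex expansion is $h_{out}(G)=\min\{|\partial_{out}(A)|/|A| : A\subseteq X,\ 0<|A|\le n/2\}$. For disjoint $L,R\subseteq X$ with $L\cup R\ne\emptyset$, $b_{out}(L,R)=\dfrac{I(L)+I(R)+|\partial_{out}(L\cup R)|}{|L\cup R|}$, and $\beta_{out}(G)=\min_{L,R}b_{out}(L,R)$ over all such pairs. *)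

From mathcomp Require Import all_boot all_order all_algebra all_fingroup.
Set Implicit Arguments. Unset Strict Implicit. Unset Printing Implicit Defensive.
Import Order.TTheory GRing.Theory Num.Theory.

Definition cay_adj (gT : finGroupType) (S : {set gT}) (x y : gT) : bool :=
  [exists s in S, y == (x * s)%g].

Definition cayley_bipartite (gT : finGroupType) (S : {set gT}) : Prop :=
  exists f : gT -> bool, forall x s, s \in S -> f x != f (x * s)%g.

Definition dout (gT : finGroupType) (S : {set gT}) (A : {set gT}) : {set gT} :=
  [set x | (x \notin A) && [exists y in A, cay_adj S x y]].

Definition Iin (gT : finGroupType) (S : {set gT}) (A : {set gT}) : nat :=
  #|[set x in A | [exists y in A, cay_adj S x y]]|.

Local Open Scope ring_scope.

(* The neutral element
   n%:R of the iterated min is >= every candidate value (|dout A| <= n,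
   |A| >= 1), so it does not affect the minimum when the index is nonempty. *)
Definition h_out (gT : finGroupType) (S : {set gT}) : rat :=
  \big[Num.min/(#|gT|%:R : rat)]_(A : {set gT} | (A != set0) && (2 * #|A| <= #|gT|)%N)
     ((#|dout S A|)%:R / (#|A|)%:R).

Definition b_out (gT : finGroupType) (S : {set gT}) (L R : {set gT}) : rat :=
  ((Iin S L + Iin S R + #|dout S (L :|: R)|)%N)%:R / (#|L :|: R|)%:R.

(* beta_out(G) = min over disjoint L, R with L u R nonempty; again n%:R
   bounds every candidate from above. *)
Definition beta_out (gT : finGroupType) (S : {set gT}) : rat :=
  \big[Num.min/(#|gT|%:R : rat)]_(LR : {set gT} * {set gT} |
        [disjoint LR.1 & LR.2] && (LR.1 :|: LR.2 != set0))
     b_out S LR.1 LR.2.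

From mathcomp Require Import all_boot all_order all_algebra all_fingroup zify.
Set Implicit Arguments. Unset Strict Implicit. Unset Printing Implicit Defensive.
Import Order.TTheory GRing.Theory Num.Theory.

(* Suppose [200 * b_out S L R < h_out S] and write [U = L :|: R], [m = #|U|] and
   [E = Iin S L + Iin S R + #|dout S U|].  If [E] is not tiny compared to [m]
   this contradicts [h_out S <= 2].  Otherwise expansion forces [U] to cover
   more than half of the group, and for every [g] the set [agree g e] of the
   [x] in [U :&: g *: U] such that [x] and [g^-1 * x] lie on the same side
   ([e = true]) or on opposite sides ([e = false]) of [L] has boundary at
   most [2 E]; by expansion it is either tiny or more than half of
   the group.  The [g] for which one of the two sets is large form a subgroup,
   and an averaging argument over pairs of points of [U] shows that it
   contains a conjugate of [S], hence is everything.  The side [e] of the large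
   set is then a homomorphism to Z/2 that sends every generator to "opposite
   sides": a proper 2-colouring of the Cayley graph. *)

Local Open Scope group_scope.

Section CayleyBoundary.
Variables (gT : finGroupType) (S : {set gT}).
Implicit Types (A B : {set gT}) (g x : gT).

Definition inner A := [set x in A | [exists y in A, cay_adj S x y]].

Lemma nbr_inP A x :
  reflect (exists2 s, s \in S & x * s \in A) [exists y in A, cay_adj S x y].
Proof.
apply: (iffP exists_inP) => [[y yA /exists_inP[s sS /eqP ys]]|[s sS xsA]].
  by exists s; rewrite -?ys.
by exists (x * s) => //; apply/exists_inP; exists s.
Qed.

Lemma doutP A x :
  reflect (x \notin A /\ exists2 s, s \in S & x * s \in A) (x \in dout S A).
Proof. by rewrite inE; apply: (iffP andP) => -[xA nb]; split=> //; apply/nbr_inP. Qed.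

Lemma innerP A x :
  reflect (x \in A /\ exists2 s, s \in S & x * s \in A) (x \in inner A).
Proof. by rewrite inE; apply: (iffP andP) => -[xA nb]; split=> //; apply/nbr_inP. Qed.

Lemma dout_lcoset g A : dout S (g *: A) = g *: dout S A.
Proof.
apply/setP=> x; rewrite mem_lcoset.
apply/doutP/doutP => -[xA [s sS xsA]].
  by move: xA xsA; rewrite !mem_lcoset mulgA; split=> //; exists s.
by split; [rewrite mem_lcoset | exists s; rewrite // mem_lcoset mulgA].
Qed.

Lemma dout_setI A B : dout S (A :&: B) \subset dout S A :|: dout S B.
Proof.
apply/subsetP=> x /doutP[xAB [s sS]]; rewrite in_setI => /andP[xsA xsB].
rewrite in_setI negb_and in xAB; rewrite in_setU.
by case/orP: xAB => xA; apply/orP; [left|right]; apply/doutP; split=> //; exists s.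
Qed.

Lemma card_dout_le A : #|dout S A| <= #|gT| - #|A|.
Proof.
have sub : dout S A \subset ~: A by apply/subsetP=> x /doutP[xA _]; rewrite inE.
by rewrite -(cardsC A) addKn subset_leq_card.
Qed.

Hypothesis symS : S^-1 = S.

Lemma mem_dout_edge A x t :
  x \in A -> t \in S -> x * t \notin A -> x * t \in dout S A.
Proof.
move=> xA tS xtA; apply/doutP; split=> //.
by exists t^-1; rewrite ?mulgK // -symS memV_invg.
Qed.

End CayleyBoundary.

Section Averaging.
Variables (gT : finGroupType) (U : {set gT}) (bad : gT -> gT -> bool).

Lemma card_set_sum (P : pred gT) : #|[set z | P z]| = \sum_z P z.
Proof. by rewrite -sum1dep_card big_mkcond /=; apply: eq_bigr => z _; case: (P z). Qed.

Lemma sum_card_bad_rows :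
  \sum_(x in U) #|[set y in U | bad x y]| =
  \sum_(g : gT) #|[set x in U :&: g *: U | bad x (g^-1 * x)]|.
Proof.
transitivity (\sum_(x in U) \sum_(g : gT)
                 (((g^-1 * x)%g \in U) && bad x (g^-1 * x)%g : nat)).
  apply: eq_bigr => x _; rewrite card_set_sum.
  rewrite (reindex_inj (h := fun g => g^-1 * x)) //.
  by move=> g1 g2 /mulIg /invg_inj.
rewrite exchange_big; apply: eq_bigr => g _; rewrite card_set_sum big_mkcond.
by apply: eq_bigr => x _; rewrite !inE mem_lcoset; case: (x \in U).
Qed.

Lemma exists_light_row c :
  #|gT| < 2 * #|U| ->
  (forall g : gT, 2 * c * #|[set x in U :&: g *: U | bad x (g^-1 * x)]| < #|U|) ->
  exists x0, c * #|[set y in U | bad x0 y]| < #|U|.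
Proof.
move=> U_large light_diag; set m := #|U|.
have n_gt0 : 0 < #|gT| by apply/card_gt0P; exists 1.
have total : 2 * c * \sum_(x in U) #|[set y in U | bad x y]| < #|gT| * m.
  rewrite sum_card_bad_rows big_distrr /=.
  have : \sum_(g : gT) (2 * c * #|[set x in U :&: g *: U | bad x (g^-1 * x)]| + 1)
           <= \sum_(g : gT) m.
    by apply: leq_sum => g _; rewrite addn1.
  rewrite big_split /= !sum_nat_const (_ : #|xpredT| = #|gT|) //.
  lia.
case: (pickP [pred x0 | c * #|[set y in U | bad x0 y]| < m]) => [x0 lt|heavy].
  by exists x0.
have : m * m <= c * \sum_(x in U) #|[set y in U | bad x y]|.
  rewrite big_distrr {1}/m -sum_nat_const; apply: leq_sum => x _.
  by move: (heavy x) => /= /negbT; rewrite -leqNgt.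
have : #|gT| * m < 2 * m * m by rewrite ltn_pmul2r ?U_large //; lia.
lia.
Qed.

End Averaging.

Section Gap.
Variables (gT : finGroupType) (S L R : {set gT}).
Hypothesis symS : S^-1 = S.

Local Notation U := (L :|: R).
Local Notation n := #|gT|.
Local Notation m := #|U|.
Local Notation E := (Iin S L + Iin S R + #|dout S U|)%N.

(* [max_card] restated with the [#|gT|] of this section, so that [lia]
   identifies the two. *)
Let max_card_set (A : {set gT}) : #|A| <= n := max_card A.

Definition defect := inner S L :|: inner S R :|: dout S U.

Lemma card_defect : #|defect| <= E.
Proof.
apply: leq_trans (leq_card_setU _ _) _; rewrite leq_add2r.
exact: leq_card_setU.
Qed.

Lemma defect_edge x s : s \in S -> x \notin defect -> x * s \in U ->
  x \in U /\ (x * s \in L) = (x \notin L).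
Proof.
move=> sS xB xsU; rewrite !in_setU !negb_or in xB.
case/andP: xB => /andP[xIL xIR] xdU.
have xU : x \in U by apply: contraNT xdU => xU; apply/doutP; split=> //; exists s.
split=> //; case xL: (x \in L).
  by apply/negbTE; apply: contra xIL => xsL; apply/innerP; split=> //; exists s.
have xR : x \in R by move: xU; rewrite in_setU xL.
move: xsU; rewrite in_setU => /orP[-> // | xsR].
by case/negP: xIR; apply/innerP; split=> //; exists s.
Qed.

Definition agree g e :=
  [set x in U :&: g *: U | ((x \in L) == (g^-1 * x \in L)) == e].

Lemma in_agree g e x : (x \in agree g e) =
  [&& x \in U, g^-1 * x \in U & ((x \in L) == (g^-1 * x \in L)) == e].
Proof. by rewrite in_set in_setI mem_lcoset andbA. Qed.

Lemma dout_agree g e : dout S (agree g e) \subset defect :|: g *: defect.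
Proof.
apply/subsetP=> x /doutP[xT [s sS]].
rewrite in_agree mulgA => /and3P[xsU gxsU exs].
rewrite in_setU mem_lcoset; apply: contraR xT; rewrite negb_or => /andP[xB gxB].
have [xU xsL] := defect_edge sS xB xsU.
have [gxU gxsL] := defect_edge sS gxB gxsU.
move/eqP: exs => <-; rewrite in_agree xU gxU xsL gxsL.
by case: (x \in L); case: (g^-1 * x \in L).
Qed.

Lemma card_dout_agree g e : #|dout S (agree g e)| <= 2 * E.
Proof.
apply: leq_trans (subset_leq_card (dout_agree g e)) _.
apply: leq_trans (leq_card_setU _ _) _.
by rewrite card_lcoset mul2n -addnn leq_add ?card_defect.
Qed.

Lemma card_agree_pair g e : #|agree g e| + #|agree g (~~ e)| = #|U :&: g *: U|.
Proof.
rewrite -(cardsID [set x | ((x \in L) == (g^-1 * x \in L)) == e] (U :&: g *: U)).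
congr (_ + _).
  by apply: eq_card => x; rewrite !inE andbC.
apply: eq_card => x; rewrite !inE andbC.
by case: (_ \in L); case: (_ \in L); case: e; rewrite /= ?andbT ?andbF.
Qed.

Lemma agree1 : agree 1 true = U.
Proof. by apply/setP=> x; rewrite in_agree invg1 mul1g !eqxx andbT andbb. Qed.

Section Expansion.
Hypothesis U_gt0 : 0 < m.
Hypothesis expansion : forall A, A != set0 -> 2 * #|A| <= n ->
  200 * E * #|A| < #|dout S A| * m.

Lemma expansion_dout A k : A != set0 -> 2 * #|A| <= n ->
  #|dout S A| <= k * E -> 200 * #|A| < k * m.
Proof.
move=> A0 A_small dA; have := expansion A0 A_small.
move/leq_trans => /(_ (k * E * m)%N); rewrite leq_mul2r dA orbT => /(_ isT).
by rewrite -mulnA mulnCA [(k * _)%N]mulnC -mulnA ltn_mul2l => /andP[].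
Qed.

Lemma n_lt_2m : n < 2 * m.
Proof.
rewrite ltnNge; apply/negP => U_small.
have U0 : U != set0 by rewrite -card_gt0.
by have := expansion_dout U0 U_small (k := 1); rewrite mul1n leq_addl; lia.
Qed.

Lemma small_agree g e : 2 * #|agree g e| <= n -> 100 * #|agree g e| < m.
Proof.
have [-> | T0 T_small] := eqVneq (agree g e) set0; first by rewrite cards0.
by have := expansion_dout T0 T_small (card_dout_agree g e); lia.
Qed.

Lemma large_agree_compl g e : n < 2 * #|agree g e| -> 2 * #|agree g (~~ e)| <= n.
Proof. by have := card_agree_pair g e; have := max_card_set (U :&: g *: U); lia. Qed.

Lemma large_agree_card g e : n < 2 * #|agree g e| -> 199 * m < 300 * #|agree g e|.
Proof.
move=> large; have := small_agree (large_agree_compl large).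
have := card_agree_pair g e; have := cardsUI U (g *: U).
by rewrite card_lcoset; have := max_card_set (U :|: g *: U); lia.
Qed.

Lemma large_agreeM g h e e' : n < 2 * #|agree g e| -> n < 2 * #|agree h e'| ->
  n < 2 * #|agree (g * h) (e == e')|.
Proof.
move=> large_g large_h; set D := agree g e :&: g *: agree h e'.
have sub_gh : D \subset agree (g * h) (e == e').
  apply/subsetP=> x; rewrite in_setI mem_lcoset !in_agree invMg -mulgA.
  case/andP=> /and3P[-> _ ex] /and3P[_ -> ex'] /=.
  by move: ex ex'; do 3!case: (_ \in L); case: (e); case: (e').
have dout_D : #|dout S D| <= 4 * E.
  apply: leq_trans (subset_leq_card (dout_setI S _ _)) _.
  apply: leq_trans (leq_card_setU _ _) _; rewrite dout_lcoset card_lcoset.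
  by have := card_dout_agree g e; have := card_dout_agree h e'; lia.
have card_D : #|agree g e| + #|agree h e'| <= #|D| + m.
  rewrite -(card_lcoset (agree h e') g) -(cardsUI (agree g e)) -/D addnC leq_add2l.
  rewrite -(card_lcoset U g); apply: subset_leq_card.
  rewrite subUset lcosetS; apply/andP; split; apply/subsetP=> x.
    by rewrite in_agree mem_lcoset => /and3P[].
  by rewrite in_agree => /and3P[].
have := large_agree_card large_g; have := large_agree_card large_h.
move=> large_g3 large_h3.
apply: leq_trans (_ : n < 2 * #|D|) _; last by rewrite leq_mul2l subset_leq_card.
rewrite ltnNge; apply/negP => D_small.
have D0 : D != set0 by rewrite -card_gt0; lia.
by have := expansion_dout D0 D_small dout_D; lia.
Qed.

Section Connected.
Hypothesis genS : <<S>> = [set: gT].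
Hypothesis E_small : 100 * E < m.

Lemma no_small_absorbing_set (Bad : {set gT}) t : t \in S -> 25 * #|Bad| < m ->
  {in U, forall y, y \notin Bad -> y \notin defect -> y * t \in U -> y * t \in Bad} ->
  False.
Proof.
move=> tS Bad_small absorb.
have cover : U \subset Bad :|: defect :|: (Bad :|: dout S U) :* t^-1.
  apply/subsetP=> y yU.
  have [yBB | ] := boolP (y \in Bad :|: defect); first by rewrite in_setU yBB.
  rewrite in_setU negb_or => /andP[yBad yB].
  rewrite in_setU mem_rcoset invgK; apply/orP; right; rewrite in_setU.
  have [ytU | ytU] := boolP (y * t \in U); first by rewrite absorb.
  by rewrite (mem_dout_edge symS yU tS) ?orbT.
have : m <= #|Bad| + #|defect| + (#|Bad| + #|dout S U|).
  apply: leq_trans (subset_leq_card cover) _.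
  apply: leq_trans (leq_card_setU _ _) _; rewrite card_rcoset.
  by apply: leq_add; apply: leq_card_setU.
by have := card_defect; lia.
Qed.

Definition coherent := [set g | [exists e, n < 2 * #|agree g e|]].

Lemma coherentP g : reflect (exists e, n < 2 * #|agree g e|) (g \in coherent).
Proof. by rewrite inE; apply: existsP. Qed.

Lemma group_set_coherent : group_set coherent.
Proof.
apply/group_setP; split; first by apply/coherentP; exists true; rewrite agree1 n_lt_2m.
move=> g h /coherentP[e large_g] /coherentP[e' large_h]; apply/coherentP.
by exists (e == e'); apply: large_agreeM.
Qed.

Canonical coherent_group := Group group_set_coherent.

Lemma coherent_full : coherent = [set: gT].
Proof.
pose bad x y := x * y^-1 \notin coherent.
have [x0 light] : exists x0, 25 * #|[set y in U | bad x0 y]| < m.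
  apply: (exists_light_row (bad := bad) n_lt_2m) => g.
  have bad_g x : bad x (g^-1 * x) = (g \notin coherent).
    by rewrite /bad invMg invgK mulKVg.
  have [g_coh | g_incoh] := boolP (g \in coherent).
    suff -> : [set x in U :&: g *: U | bad x (g^-1 * x)] = set0 by rewrite cards0.
    by apply/setP=> x; rewrite in_set bad_g g_coh andbF in_set0.
  have small e : 100 * #|agree g e| < m.
    apply: small_agree; rewrite leqNgt; apply: contra g_incoh => large.
    by apply/coherentP; exists e.
  have card_diag : 50 * (#|agree g true| + #|agree g false|) < m.
    by have := small true; have := small false; lia.
  suff -> : [set x in U :&: g *: U | bad x (g^-1 * x)] = U :&: g *: U.
    by rewrite -(card_agree_pair g true); exact: card_diag.
  by apply/setP=> x; rewrite in_set bad_g g_incoh andbT.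
suff sub_conj : S \subset coherent :^ x0.
  apply/eqP; rewrite eqEsubset subsetT -(conjSg _ _ x0) conjTg -genS.
  by rewrite gen_subG.
have BadE y : (y \in [set y in U | bad x0 y]) = (y \in U) && bad x0 y by rewrite in_set.
(* Almost all of [U] lies in the right coset [coherent :* x0], so no generator
   can move that coset off itself. *)
apply/subsetP=> t tS; rewrite mem_conjg conjgE invgK; apply/negPn/negP => not_coh.
apply: (no_small_absorbing_set (t := t^-1)) light _; first by rewrite -symS memV_invg.
move=> y yU; rewrite !BadE yU /bad /= negbK => y_coh _ ytU.
rewrite ytU /=; apply: contra not_coh => yt_coh.
have := groupM yt_coh (groupVr y_coh).
by rewrite !invMg !invgK !mulgA mulgKV.
Qed.

Definition parity g := n < 2 * #|agree g true|.

Lemma parityE g e : n < 2 * #|agree g e| -> parity g = e.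
Proof.
case: e => // large; apply/negbTE; rewrite /parity -leqNgt.
exact: large_agree_compl large.
Qed.

Lemma large_agree_parity g : n < 2 * #|agree g (parity g)|.
Proof.
have /coherentP[e large] : g \in coherent by rewrite coherent_full inE.
by rewrite (parityE large).
Qed.

Lemma parityM g h : parity (g * h) = (parity g == parity h).
Proof. exact/parityE/large_agreeM/large_agree_parity/large_agree_parity. Qed.

Lemma parityV g : parity g^-1 = parity g.
Proof.
have := parityM g g^-1; rewrite mulgV (parityE (e := true)) ?agree1 ?n_lt_2m //.
by case: (parity g); case: (parity g^-1).
Qed.

Lemma parity_gen t : t \in S -> parity t = false.
Proof.
move=> tS; apply/negbTE/negP => t_even.
pose bad x y := ((x \in L) == (y \in L)) != parity (x * y^-1).
have [x0 light] : exists x0, 25 * #|[set y in U | bad x0 y]| < m.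
  apply: (exists_light_row (bad := bad) n_lt_2m) => g.
  have -> : [set x in U :&: g *: U | bad x (g^-1 * x)] = agree g (~~ parity g).
    apply/setP=> x; rewrite in_agree in_set in_setI mem_lcoset /bad.
    rewrite invMg invgK mulKVg -andbA.
    by case: (x \in L); case: (g^-1 * x \in L); case: (parity g).
  have := small_agree (large_agree_compl (large_agree_parity g)); lia.
have BadE y : (y \in [set y in U | bad x0 y]) = (y \in U) && bad x0 y by rewrite in_set.
apply: (no_small_absorbing_set tS light) => y yU.
rewrite !BadE yU /bad /= negbK => /eqP y_good yB ytU.
have [_ ->] := defect_edge tS yB ytU.
rewrite ytU invMg mulgA !parityM parityV t_even.
move: y_good; rewrite parityM.
by case: (x0 \in L); case: (y \in L); case: (parity x0); case: (parity y^-1).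
Qed.

Lemma bipartite_of_expansion : cayley_bipartite S.
Proof.
by exists parity => x s sS; rewrite parityM (parity_gen sS); case: (parity x).
Qed.

End Connected.
End Expansion.
End Gap.

Local Open Scope ring_scope.

Lemma h_out_le2 (gT : finGroupType) (S : {set gT}) : h_out S <= 2%:R.
Proof.
have [n_le1 | n_gt1] := leqP #|gT| 1.
  by apply: le_trans (bigmin_le_id _ _ _ _) _; rewrite ler_nat (leq_trans n_le1).
have [A /eqP cardA] : exists A : {set gT}, #|A| == (#|gT| %/ 2)%N.
  have : (0 < #|[set A : {set gT} | #|A| == #|gT| %/ 2]|)%N.
    by rewrite card_draws bin_gt0 leq_div.
  by case/card_gt0P => A; rewrite inE => ?; exists A.
have A_gt0 : (0 < #|A|)%N by rewrite cardA; lia.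
apply: le_trans (bigmin_le_cond _ (j := A) _ _) _.
  by rewrite -card_gt0 A_gt0 cardA /=; lia.
rewrite ler_pdivrMr ?ltr0n // -[2%:R * _]natrM ler_nat.
by have := card_dout_le S A; lia.
Qed.

Lemma dout_gt_of_lt_h_out (gT : finGroupType) (S : {set gT}) (a b : nat) :
  (0 < b)%N -> a%:R / b%:R < h_out S ->
  forall A : {set gT}, A != set0 -> (2 * #|A| <= #|gT|)%N ->
  (a * #|A| < #|dout S A| * b)%N.
Proof.
move=> b_gt0 lt_h A A0 A_small.
have := lt_le_trans lt_h (bigmin_le_cond _ (j := A) _ (introT andP (conj A0 A_small))).
by rewrite ltr_pdivrMr ?ltr0n // mulrAC ltr_pdivlMr ?ltr0n ?card_gt0 // -!natrM ltr_nat.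
Qed.

Lemma h_out_le_b_out (gT : finGroupType) (S L R : {set gT}) :
  (<<S>> = [set: gT])%g -> (S^-1)%g = S -> ~ cayley_bipartite S ->
  L :|: R != set0 ->
  h_out S <= 200%:R * b_out S L R.
Proof.
move=> genS symS nbip U0.
have U_gt0 : (0 < #|L :|: R|)%N by rewrite card_gt0.
rewrite /b_out mulrA -[200%:R * _]natrM.
have [E_large | E_small] :=
  leqP #|L :|: R| (100 * (Iin S L + Iin S R + #|dout S (L :|: R)|)).
  apply: le_trans (h_out_le2 S) _.
  by rewrite ler_pdivlMr ?ltr0n // -[2%:R * _]natrM ler_nat; lia.
rewrite leNgt; apply/negP => /(dout_gt_of_lt_h_out U_gt0) expansion.
exact/nbip/(bipartite_of_expansion symS U_gt0 expansion genS E_small).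
Qed.

Theorem theorem3 (gT : finGroupType) (S : {set gT}) :
  (<<S>> = [set: gT])%g ->
  (S^-1)%g = S ->
  ~ cayley_bipartite S ->
  h_out S <= 200%:R * beta_out S.
Proof.
move=> genS symS nbip.
have c_gt0 : (0 : rat) < 200%:R by rewrite ltr0n.
rewrite -(ler_pdivrMl _ _ c_gt0); apply: le_bigmin.
  rewrite (ler_pdivrMl _ _ c_gt0); apply: le_trans (bigmin_le_id _ _ _ _) _.
  by rewrite -natrM ler_nat leq_pmull.
case=> L R /= /andP[_ U0]; rewrite (ler_pdivrMl _ _ c_gt0).
exact: h_out_le_b_out.
Qed.
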